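(* Let $n\ge 1$, let $x_1,\dots,x_n$ be distinct integers each greater than $1$, and let $D=\{1,0,x_1,\dots,x_n\}$. If $(T,s)$ is an optimal signed tree realizing $D$, then there is exactly one edge $e$ of $T$ with $s(e)=-$.
   Context: A signed tree is a pair $(T,s)$ where $T$ is a finite tree and $s:E(T)\to\{+,-\}$. The signed degree $sdeg(v)$ of a vertex is the number of incident positive edges minus the number of incident negative edges. $(T,s)$ realizes $D$ if $D=\{sdeg(v):v\in V(T)\}$. $\sigma(D)=\min\{|V(T)|: \text{some signed tree }(T,s)\text{ realizes }D\}$, and a signed tree $(T,s)$ realizing $D$ is optimal if $|V(T)|=\sigma(D)$. *)

From mathcomp Require Import all_boot all_order all_algebra.
Set Implicit Arguments. Unset Strict Implicit. Unset Printing Implicit Defensive.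
Import GRing.Theory Num.Theory.

Definition simple_graph (V : finType) (e : rel V) : Prop :=
  symmetric e /\ irreflexive e.

Definition is_tree (V : finType) (e : rel V) : Prop :=
  [/\ simple_graph e,
      0 < #|V|,
      (forall x y : V, connect e x y) &
      (forall c : seq V, 3 <= size c -> uniq c -> ~~ cycle e c)]%N.

(* A sign function: an edge {u,v} (as the 2-element set [set u; v]) is
   positive iff s [set u; v] = true. *)
Definition sdeg (V : finType) (e : rel V) (s : {set V} -> bool) (v : V) : int :=
  (#|[set w | e v w && s [set v; w]]|%:Z - #|[set w | e v w && ~~ s [set v; w]]|%:Z)%R.

Definition realizes (V : finType) (e : rel V) (s : {set V} -> bool)
  (D : int -> Prop) : Prop :=
  forall d : int, D d <-> exists v : V, sdeg e s v = d.

Definition optimal_realization (V : finType) (e : rel V) (s : {set V} -> bool)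
  (D : int -> Prop) : Prop :=
  [/\ is_tree e, realizes e s D &
      forall (V' : finType) (e' : rel V') (s' : {set V'} -> bool),
        is_tree e' -> realizes e' s' D -> (#|V| <= #|V'|)%N].

Definition neg_edges (V : finType) (e : rel V) (s : {set V} -> bool) : {set {set V}} :=
  [set E : {set V} | [exists u : V, exists v : V, [&& e u v, E == [set u; v] & ~~ s E]]].

From mathcomp Require Import all_boot all_order all_algebra.
From mathcomp Require Import zify.
Set Implicit Arguments. Unset Strict Implicit. Unset Printing Implicit Defensive.
Import GRing.Theory Num.Theory.

(* Every signed degree in D is nonnegative, so a vertex v with q(v) incident
   negative edges has degree sdeg v + 2 q(v) >= 1 + q(v) + (sdeg v - 1).  Summing
   over the vertices, with sum deg = 2|V| - 2 and sum q = 2 #(negative edges),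
   gives 2 #(negative edges) + sum_v (sdeg v - 1) + 2 <= |V|, and injectivity
   of x bounds the sum from below by sum_i (x_i - 1).  A caterpillar with
   4 + sum_i (x_i - 1) vertices and one negative edge realizes D, so an optimal
   tree has at most one negative edge; it has one, at a vertex of signed
   degree 0. *)

Lemma eq_set2 (T : finType) (a b c d : T) : a != b ->
  ([set a; b] == [set c; d]) = ((a == c) && (b == d)) || ((a == d) && (b == c)).
Proof.
move=> ab; apply/eqP/idP => [E|].
  have := set21 a b; have := set22 a b; rewrite E.
  by move=> /set2P[] ? /set2P[] ?; subst; rewrite ?eqxx ?orbT // in ab *.
by case/orP => /andP[/eqP-> /eqP->] //; apply: setUC.
Qed.

Section Handshake.
Variables (V : finType) (r : rel V).
Hypotheses (r_sym : symmetric r) (r_irr : irreflexive r).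

Definition edge_set : {set {set V}} :=
  [set E | [exists u, exists v, r u v && (E == [set u; v])]].

Lemma handshake : (\sum_v #|[set w | r v w]| = 2 * #|edge_set|)%N.
Proof.
transitivity (\sum_v \sum_(w | r v w) 1)%N.
  by apply: eq_bigr => v _; rewrite sum_nat_cond_const muln1.
rewrite pair_big_dep (partition_big (fun p => [set p.1; p.2]) (mem edge_set)) /=; last first.
  move=> [u v] uv; rewrite inE.
  by apply/existsP; exists u; apply/existsP; exists v; rewrite uv /=.
rewrite -sum1_card big_distrr /=; apply: eq_bigr => E /[1!inE].
case/existsP=> u /existsP[v /andP[uv /eqP->]].
have u_neq_v : u != v by apply: contraTneq uv => ->; rewrite r_irr.
have uv_neq_vu : (u, v) != (v, u) by rewrite xpair_eqE negb_and u_neq_v.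
rewrite sum_nat_cond_const muln1 (_ : [set p | _] = [set (u, v); (v, u)]).
  by rewrite cards2 uv_neq_vu.
apply/setP => -[a b]; rewrite !inE /= !xpair_eqE.
case ab: (r a b) => /=.
  have a_neq_b : a != b by apply: contraTneq ab => ->; rewrite r_irr.
  by rewrite eq_set2.
by apply/esym/negbTE; apply: contraFN ab => /orP[]/andP[/eqP-> /eqP->]; rewrite // r_sym.
Qed.

End Handshake.

Section Forest.
Variables (V : finType) (e : rel V).
Hypotheses (e_sym : symmetric e) (e_irr : irreflexive e)
  (e_acyclic : forall c : seq V, (3 <= size c)%N -> uniq c -> ~~ cycle e c).

Lemma acyclic_fresh_nbr x p w : uniq (x :: p) -> path e x p -> e x w ->
  w != head x p -> w \notin x :: p.
Proof.
move=> uq pth xw w_new; rewrite inE negb_or; apply/andP; split.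
  by apply: contraTneq xw => ->; rewrite e_irr.
case: p uq pth w_new => [//|y p] uq /= /andP[xy pth] w_new.
rewrite inE negb_or w_new /=; apply/negP => w_p.
move: uq pth; case/splitPr: w_p => p1 p2 uq pth.
apply: (negP (e_acyclic (c := x :: y :: rcons p1 w) _ _)).
- by rewrite /= size_rcons.
- by move: uq; rewrite -cat_rcons -cat_cons -cat_cons cat_uniq => /andP[].
rewrite /cycle rcons_path /= last_rcons xy e_sym xw andbT /=.
by move: pth; rewrite -cat_rcons cat_path => /andP[].
Qed.

Lemma acyclic_leaf (A : {set V}) : A != set0 ->
  exists2 l, l \in A & (#|[set w in A | e l w]| <= 1)%N.
Proof.
(* Otherwise simple paths inside [A] could be extended forever. *)
move=> /set0Pn[a Aa]; apply/exists_inP; apply: contraT.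
rewrite negb_exists_in => /forall_inP branching.
have long_path k : exists x p,
    [/\ size p = k, uniq (x :: p), {subset x :: p <= A} & path e x p].
  elim: k => [|k [x [p [sz uq sub pth]]]].
    by exists a, [::]; split=> // y; rewrite inE => /eqP->.
  have [w [wA xw w_new]] : exists w, [/\ w \in A, e x w & w != head x p].
    have /card_gt1P[w1 [w2 []]] : (1 < #|[set w in A | e x w]|)%N.
      by rewrite ltnNge branching // sub // mem_head.
    rewrite !inE => /andP[w1A xw1] /andP[w2A xw2] w12.
    case: (eqVneq w1 (head x p)) => [w1E|]; last by exists w1.
    by exists w2; split=> //; rewrite -w1E eq_sym.
  exists w, (x :: p); split=> /=; first by rewrite sz.
  - by rewrite (acyclic_fresh_nbr uq pth xw w_new).
  - by move=> y /[1!inE] /predU1P[->|/sub].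
  - by rewrite e_sym xw.
have [x [p [sz uq sub _]]] := long_path #|A|.
have := uniq_leq_size uq (s2 := enum A); rewrite /= sz -cardE ltnn.
by apply=> y /sub; rewrite mem_enum.
Qed.

Lemma acyclic_degree_sum (A : {set V}) : A != set0 ->
  (\sum_(v in A) #|[set w in A | e v w]| + 2 <= 2 * #|A|)%N.
Proof.
have [k] := ubnP #|A|; elim: k A => // k IH A /ltnSE A_le_k A_ne0.
have [l lA l_leaf] := acyclic_leaf A_ne0.
set A' := A :\ l.
have cardA : #|A| = #|A'|.+1 by rewrite (cardsD1 l A) lA.
have degA v : #|[set w in A | e v w]| = (e v l + #|[set w in A' | e v w]|)%N.
  rewrite (cardsD1 l) !inE lA; congr (_ + _).
  by apply: eq_card => w; rewrite !inE andbA.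
have sum_deg_l : (\sum_(v in A') (e v l : nat) = #|[set w in A | e l w]|)%N.
  rewrite degA e_irr add0n -sum1_card [LHS]big_mkcond [RHS]big_mkcond /=.
  apply: eq_bigr => v _; rewrite !inE e_sym.
  by case: (e l v); rewrite ?andbT ?andbF; case: ifP.
rewrite (bigD1 l lA) /= (eq_bigl (mem A')) => [|v]; last by rewrite !inE andbC.
under eq_bigr do rewrite degA.
rewrite big_split /= sum_deg_l cardA.
have [A'0|A'_ne0] := eqVneq A' set0.
  by rewrite A'0 big_set0 cards0 -sum_deg_l A'0 big_set0.
have A'_lt_k : (#|A'| < k)%N by rewrite -ltnS -cardA.
have := IH A' A'_lt_k A'_ne0; rewrite -cardA; lia.
Qed.

End Forest.

Section SignedDegrees.
Variables (V : finType) (e : rel V) (s : {set V} -> bool).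

Definition degree (v : V) : nat := #|[set w | e v w]|.
Definition neg_degree (v : V) : nat := #|[set w | e v w && ~~ s [set v; w]]|.

Lemma sdeg_degree v : sdeg e s v = ((degree v)%:Z - 2 * (neg_degree v)%:Z)%R.
Proof.
rewrite /sdeg /degree /neg_degree -(cardsID [set w | s [set v; w]] [set w | e v w]).
have -> : [set w | e v w] :&: [set w | s [set v; w]] = [set w | e v w && s [set v; w]].
  by apply/setP => w; rewrite !inE.
have -> : [set w | e v w] :\: [set w | s [set v; w]] = [set w | e v w && ~~ s [set v; w]].
  by apply/setP => w; rewrite !inE andbC.
lia.
Qed.

Lemma sum_neg_degree : simple_graph e ->
  (\sum_v neg_degree v = 2 * #|neg_edges e s|)%N.
Proof.
move=> [e_sym e_irr].
pose r v w := e v w && ~~ s [set v; w].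
have -> : neg_edges e s = edge_set r.
  apply/setP => E; rewrite !inE; apply: eq_existsb => u; apply: eq_existsb => v.
  rewrite /r; case: eqP => [->|_]; rewrite ?andbF ?andbT //.
have r_sym : symmetric r by move=> u v; rewrite /r e_sym setUC.
have r_irr : irreflexive r by move=> u; rewrite /r e_irr.
exact: handshake r_sym r_irr.
Qed.

Hypothesis e_tree : is_tree e.

Lemma tree_degree_sum : (\sum_v degree v + 2 <= 2 * #|V|)%N.
Proof.
have [[e_sym e_irr] V_gt0 _ e_acyclic] := e_tree.
have := acyclic_degree_sum e_sym e_irr e_acyclic (A := [set: V]).
rewrite cardsT (eq_bigl xpredT) => [|v]; last exact: in_setT.
have -> : (\sum_v #|[set w in [set: V] | e v w]| = \sum_v degree v)%N.
  by apply: eq_bigr => v _; apply: eq_card => w; rewrite !inE.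
by apply; rewrite -card_gt0 cardsT.
Qed.

Lemma tree_degree_gt0 v : (1 < #|V|)%N -> (0 < degree v)%N.
Proof.
have [_ _ e_conn _] := e_tree.
case/card_gt1P => [u1 [u2 [_ _ u12]]].
have [u v_neq_u] : exists u, v != u.
  by case: (eqVneq v u1) => [->|]; [exists u2 | exists u1].
case/connectP: (e_conn v u) => -[|w p] /=.
  by move=> _ uE; rewrite uE eqxx in v_neq_u.
by move=> /andP[vw _] _; rewrite card_gt0; apply/set0Pn; exists w; rewrite inE.
Qed.

Lemma signed_tree_bound : (1 < #|V|)%N -> (forall v, 0 <= sdeg e s v)%R ->
  (2 * #|neg_edges e s| + \sum_v (`|sdeg e s v|%N - 1) + 2 <= #|V|)%N.
Proof.
move=> V_gt1 sdeg_ge0; have [e_simple _ _ _] := e_tree.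
have vertex_bound v : (1 + neg_degree v + (`|sdeg e s v|%N - 1) <= degree v)%N.
  have := sdeg_ge0 v; have := tree_degree_gt0 v V_gt1; rewrite sdeg_degree; lia.
have : (\sum_v (1 + neg_degree v + (`|sdeg e s v|%N - 1)) <= \sum_v degree v)%N.
  by apply: leq_sum => v _; exact: vertex_bound.
rewrite !big_split /= (sum_neg_degree e_simple) (_ : \sum_v 1 = #|V|)%N ?sum1_card //.
have := tree_degree_sum.
move: (\sum_v degree v)%N (\sum_v (`|sdeg e s v|%N - 1))%N #|V| #|neg_edges e s|.
by move=> b a c N; lia.
Qed.

Lemma neg_edges_gt0 z : (1 < #|V|)%N -> sdeg e s z = 0%R -> (0 < #|neg_edges e s|)%N.
Proof.
move=> V_gt1 z0.
have : (0 < neg_degree z)%N.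
  by have := tree_degree_gt0 z V_gt1; move: z0; rewrite sdeg_degree; lia.
case/card_gt0P => w; rewrite inE => /andP[zw s_zw].
apply/card_gt0P; exists [set z; w]; rewrite inE.
by apply/existsP; exists z; apply/existsP; exists w; rewrite zw eqxx.
Qed.

End SignedDegrees.

Lemma neg_degree_single (V : finType) (e : rel V) (a b v : V) :
    symmetric e -> irreflexive e -> e a b ->
  neg_degree e (fun E => E != [set a; b]) v = ((v == a) + (v == b))%N.
Proof.
move=> e_sym e_irr ab; have a_neq_b : a != b by apply: contraTneq ab => ->; rewrite e_irr.
rewrite /neg_degree
  (_ : [set w | _] = [set w | ((v == a) && (w == b)) || ((v == b) && (w == a))]).
  have [->|_] := eqVneq v a; first rewrite (negbTE a_neq_b).
    by rewrite (_ : [set w | _] = [set b]) ?cards1 //; apply/setP => w; rewrite !inE orbF.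
  case: eqVneq => _.
    by rewrite (_ : [set w | _] = [set a]) ?cards1 //; apply/setP => w; rewrite !inE.
  by rewrite (_ : [set w | _] = set0) ?cards0 //; apply/setP => w; rewrite !inE.
apply/setP => w; rewrite !inE negbK.
have [vw|] := boolP (e v w).
  by rewrite eq_set2 //; apply: contraTneq vw => ->; rewrite e_irr.
move=> not_vw /=; apply/esym/negbTE; apply: contra not_vw.
by case/orP=> /andP[/eqP-> /eqP->] //; rewrite e_sym.
Qed.

Lemma leq_sum_attained (I V : finType) (T : eqType) (x : I -> T) (d : V -> T)
    (f : T -> nat) :
  injective x -> (forall i, exists v, d v = x i) ->
  (\sum_i f (x i) <= \sum_v f (d v))%N.
Proof.
move=> x_inj /fin_all_exists[g dg].
have g_inj : injective g by move=> i j /(congr1 d); rewrite !dg => /x_inj.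
rewrite [X in (_ <= X)%N](bigID (mem (g @: I))) /=.
rewrite (big_imset _ (in2W g_inj)) /=.
apply: leq_trans (leq_addr _ _); apply: eq_leq.
by apply: eq_big => // i _; rewrite dg.
Qed.

Lemma cycle_nbrs (T : eqType) (r : rel T) (c : seq T) m :
    (3 <= size c)%N -> uniq c -> cycle r c -> m \in c ->
  exists a b, [/\ a \in c, b \in c, a != b, r m a & r b m].
Proof.
move=> c_ge3 uq cyc /rot_to[i c' cE].
have memc y : y \in c' -> y \in c by rewrite -(mem_rot i c) cE inE => ->; rewrite orbT.
move: c_ge3 uq cyc; rewrite -(size_rot i c) -(rot_uniq i c) -(rot_cycle i r c) cE.
case: c' cE memc => [|a [|b c']] // _ memc _ /and3P[_ a_out _].
rewrite /cycle /= rcons_path => /and3P[ma _ /andP[_ lm]].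
exists a, (last b c'); split=> //; rewrite ?memc ?mem_head //.
- by rewrite inE mem_last orbT.
- by apply: contraNneq a_out => ->; exact: mem_last.
Qed.

Section ParentTree.
Variable L : seq nat.
Hypothesis L_le : forall i, (i < size L)%N -> (nth 0 L i <= i)%N.

Definition parent (j : nat) : nat := nth 0 (0 :: L) j.

Definition parent_rel : rel 'I_(size L).+1 := fun u v =>
  ((0 < v)%N && (nat_of_ord u == parent v)) || ((0 < u)%N && (nat_of_ord v == parent u)).

Lemma parent_lt j : (0 < j)%N -> (parent j < j)%N.
Proof.
case: j => // i _; rewrite /parent /=.
by case: (ltnP i (size L)) => [/L_le|/(nth_default 0)->].
Qed.

Lemma parent_le j : (parent j <= j)%N.
Proof. by case: (posnP j) => [->|/parent_lt/ltnW]. Qed.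

Lemma parent_rel_sym : symmetric parent_rel.
Proof. by move=> u v; rewrite /parent_rel orbC. Qed.

Lemma parent_rel_irr : irreflexive parent_rel.
Proof.
move=> u; rewrite /parent_rel orbb; apply/andP => -[u_gt0 /eqP uE].
by have := parent_lt u_gt0; rewrite -uE ltnn.
Qed.

Lemma parent_ord (u : 'I_(size L).+1) : (parent u < (size L).+1)%N.
Proof. exact: leq_ltn_trans (parent_le u) (ltn_ord u). Qed.

Definition parent_vertex (u : 'I_(size L).+1) : 'I_(size L).+1 := inord (parent u).

Lemma val_parent_vertex (u : 'I_(size L).+1) : nat_of_ord (parent_vertex u) = parent u.
Proof. exact/inordK/parent_ord. Qed.

Lemma parent_rel_parent_vertex (u : 'I_(size L).+1) :
  (0 < u)%N -> parent_rel u (parent_vertex u).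
Proof. by move=> u_gt0; rewrite /parent_rel u_gt0 val_parent_vertex eqxx orbT. Qed.

Lemma connect_parent_root (u : 'I_(size L).+1) : connect parent_rel u ord0.
Proof.
elim/ltn_ind: (nat_of_ord u) {-2}u (erefl (nat_of_ord u)) => k IH {}u uE.
case: (posnP u) => [u0|u_gt0]; first by rewrite (_ : u = ord0) //; apply: val_inj.
apply: connect_trans (connect1 (parent_rel_parent_vertex u_gt0)) _.
by apply: (IH _ _ _ (val_parent_vertex u)); rewrite -uE parent_lt.
Qed.

Lemma parent_tree : is_tree parent_rel.
Proof.
split; first by split; [exact: parent_rel_sym | exact: parent_rel_irr].
- by rewrite card_ord.
- move=> u v; apply: connect_trans (connect_parent_root u) _.
  by rewrite (sym_connect_sym parent_rel_sym) connect_parent_root.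
move=> c c_ge3 uq; apply/negP => cyc.
have [m0 m0c] : exists m0, m0 \in c.
  by case: c c_ge3 {uq cyc} => // m0 c _; exists m0; exact: mem_head.
case: (arg_maxnP (fun y => nat_of_ord y) m0c) => m mc m_max.
(* Both cycle neighbours of the largest vertex [m] of the cycle are its parent. *)
have nbr_parent y : y \in c -> parent_rel m y -> nat_of_ord y = parent m.
  move=> yc /orP[/andP[y_gt0 /eqP mE]|/andP[_ /eqP //]].
  by have := m_max y yc; have := parent_lt y_gt0; rewrite -mE; lia.
have [a [b [ac bc ab ma bm]]] := cycle_nbrs c_ge3 uq cyc mc.
move: ab; rewrite parent_rel_sym in bm.
by rewrite -(inj_eq val_inj) /= (nbr_parent a) ?(nbr_parent b) ?eqxx.
Qed.

Lemma card_parent_nbrs (v : 'I_(size L).+1) :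
  #|[set w | parent_rel v w]| = (count (pred1 (nat_of_ord v)) L + (0 < v))%N.
Proof.
set C := [set w : 'I_(size L).+1 | (0 < w)%N && (parent w == v)].
have -> : count (pred1 (nat_of_ord v)) L = #|C|.
  rewrite -sum1_card -sum1_count (big_nth 0) big_mkord [LHS]big_mkcond [RHS]big_mkcond.
  by rewrite big_ord_recl inE Monoid.simpm; apply: eq_bigr => i _; rewrite /C inE lift0.
case: (posnP v) => [v0|v_gt0].
  by rewrite addn0; apply: eq_card => w; rewrite !inE /parent_rel v0 /= orbF eq_sym.
rewrite (_ : [set w | _] = parent_vertex v |: C).
  by rewrite cardsU1 addnC inE negb_and val_parent_vertex neq_ltn
    (leq_ltn_trans (parent_le _) (parent_lt v_gt0)) !orbT.
apply/setP => w; rewrite !inE /parent_rel v_gt0 /= orbC.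
by rewrite -(inj_eq val_inj) /= val_parent_vertex (eq_sym (nat_of_ord v)).
Qed.

End ParentTree.

Section Caterpillar.
Variables (n : nat) (x : 'I_n -> int).
Hypothesis x_gt1 : forall k, (1 < x k)%R.

(* Vertex [j > 0] hangs from [nth 0 caterpillar_parents j.-1]: the spine is
   0 - 1 - ... - (n + 3), and its vertex [k + 3] also carries [|x k| - 2] legs.
   Only the spine edge {1, 2} is negative. *)
Definition caterpillar_leg_parents : seq nat :=
  flatten [seq nseq (`|x k|%N - 2) (k + 3) | k <- enum 'I_n].

Definition caterpillar_parents : seq nat := iota 0 (n + 3) ++ caterpillar_leg_parents.

Local Notation L := caterpillar_parents.

Definition caterpillar : rel 'I_(size L).+1 := @parent_rel L.

Definition caterpillar_sign (E : {set 'I_(size L).+1}) : bool :=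
  E != [set inord 1; inord 2].

Lemma mem_caterpillar_leg_parents j : j \in caterpillar_leg_parents -> (3 <= j < n + 3)%N.
Proof.
case/flattenP => _ /mapP[k _ ->]; rewrite mem_nseq => /andP[_ /eqP->].
by rewrite leq_addl ltn_add2r ltn_ord.
Qed.

Lemma caterpillar_parents_le i : (i < size L)%N -> (nth 0 L i <= i)%N.
Proof.
move=> _; rewrite nth_cat size_iota; case: ltnP => [/nth_iota-> //|le_i].
case: (ltnP (i - (n + 3)) (size caterpillar_leg_parents)) => [lt_i|/(nth_default 0)-> //].
have /andP[_] := mem_caterpillar_leg_parents (mem_nth 0 lt_i).
by move=> /ltnW/leq_trans; apply.
Qed.

Lemma count_caterpillar_leg_parents j :
  count (pred1 j) caterpillar_leg_parents =
    (\sum_(k < n) (k + 3 == j) * (`|x k|%N - 2))%N.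
Proof.
rewrite count_flatten -map_comp sumnE big_map big_enum /=.
by apply: eq_bigr => k _; rewrite count_nseq.
Qed.

Lemma count_caterpillar_parents_spine (k : 'I_n) :
  count (pred1 (k + 3)%N) L = (`|x k|%N - 1)%N.
Proof.
rewrite count_cat count_caterpillar_leg_parents (bigD1 k) //= eqxx mul1n big1 => [|i ik].
  rewrite count_uniq_mem ?iota_uniq // mem_iota add0n ltn_add2r ltn_ord addn0.
  by have := x_gt1 k; lia.
by rewrite eqn_add2r (inj_eq val_inj) (negbTE ik).
Qed.

Lemma count_caterpillar_parents_out j : (j < 3)%N || (n + 3 <= j)%N ->
  count (pred1 j) L = (j < n + 3)%N.
Proof.
move=> j_out; rewrite count_cat count_caterpillar_leg_parents big1 => [|k _].
  by rewrite count_uniq_mem ?iota_uniq // mem_iota addn0.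
by case: eqP j_out => // <-; have := ltn_ord k; lia.
Qed.

Lemma size_caterpillar_leg_parents :
  size caterpillar_leg_parents = (\sum_(k < n) (`|x k|%N - 2))%N.
Proof.
rewrite size_flatten /shape -map_comp sumnE big_map big_enum /=.
by apply: eq_bigr => k _; rewrite size_nseq.
Qed.

Lemma card_caterpillar : #|'I_(size L).+1| = (4 + \sum_(k < n) (`|x k|%N - 1))%N.
Proof.
have -> : (\sum_(k < n) (`|x k|%N - 1) = \sum_(k < n) (`|x k|%N - 2) + n)%N.
  rewrite -[X in (_ + X)%N]card_ord -sum1_card -big_split /=.
  by apply: eq_bigr => k _; have := x_gt1 k; lia.
rewrite card_ord size_cat size_iota size_caterpillar_leg_parents; lia.
Qed.

Lemma caterpillar_tree : is_tree caterpillar.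
Proof. exact: parent_tree caterpillar_parents_le. Qed.

Lemma val_inord_caterpillar j : (j < n + 4)%N ->
  nat_of_ord (inord j : 'I_(size L).+1) = j.
Proof. by move=> j_lt; rewrite inordK // size_cat size_iota; lia. Qed.

Lemma caterpillar_edge12 : caterpillar (inord 1) (inord 2).
Proof.
rewrite /caterpillar /parent_rel /= /parent !val_inord_caterpillar ?addn4 //=.
by rewrite /caterpillar_parents nth_cat size_iota ltn_addl // nth_iota ?ltn_addl.
Qed.

Lemma sdeg_caterpillar (v : 'I_(size L).+1) :
  sdeg caterpillar caterpillar_sign v =
    ((count (pred1 (nat_of_ord v)) L + (0 < v))%N%:Z
     - 2 * ((nat_of_ord v == 1%N) + (nat_of_ord v == 2%N))%N%:Z)%R.
Proof.
have [[c_sym c_irr] _ _ _] := caterpillar_tree.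
rewrite sdeg_degree /degree (card_parent_nbrs caterpillar_parents_le).
rewrite (neg_degree_single v c_sym c_irr caterpillar_edge12).
by rewrite -!(inj_eq val_inj) /= !val_inord_caterpillar ?addn4.
Qed.

Lemma sdeg_caterpillar_spine (k : 'I_n) (v : 'I_(size L).+1) :
  nat_of_ord v = (k + 3)%N -> sdeg caterpillar caterpillar_sign v = x k.
Proof.
move=> vE; rewrite sdeg_caterpillar vE count_caterpillar_parents_spine addn3 /=.
by have := x_gt1 k; lia.
Qed.

Lemma sdeg_caterpillar_12 (v : 'I_(size L).+1) :
  (nat_of_ord v == 1) || (nat_of_ord v == 2) -> sdeg caterpillar caterpillar_sign v = 0%R.
Proof.
move=> /orP[]/eqP vE; rewrite sdeg_caterpillar vE count_caterpillar_parents_out //=; lia.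
Qed.

Lemma sdeg_caterpillar_leaf (v : 'I_(size L).+1) :
  (nat_of_ord v == 0) || (n + 3 <= v)%N -> sdeg caterpillar caterpillar_sign v = 1%R.
Proof.
move=> v_end; have v_out : (v < 3)%N || (n + 3 <= v)%N by move: v_end; lia.
rewrite sdeg_caterpillar count_caterpillar_parents_out //; move: v_end; lia.
Qed.

Lemma caterpillar_realizes :
  realizes caterpillar caterpillar_sign
    (fun d : int => d = 1%R \/ d = 0%R \/ exists k : 'I_n, d = x k).
Proof.
move=> d; split.
  case=> [->|[->|[k ->]]].
  - by exists ord0; apply: sdeg_caterpillar_leaf.
  - by exists (inord 1); apply: sdeg_caterpillar_12; rewrite val_inord_caterpillar ?addn4.
  - exists (inord (k + 3)); apply: sdeg_caterpillar_spine.
    by rewrite val_inord_caterpillar //; have := ltn_ord k; lia.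
case=> v <-.
have [v_end|] := boolP ((nat_of_ord v == 0) || (n + 3 <= v)%N).
  by left; apply: sdeg_caterpillar_leaf.
have [v_body|] := boolP ((nat_of_ord v == 1) || (nat_of_ord v == 2)).
  by right; left; apply: sdeg_caterpillar_12.
move=> v_nbody v_nend; have k_lt : (v - 3 < n)%N by move: v_nbody v_nend; lia.
right; right; exists (Ordinal k_lt); apply: sdeg_caterpillar_spine => /=.
by move: v_nbody v_nend; lia.
Qed.

End Caterpillar.

Theorem mainTheorem10 (n : nat) (x : 'I_n -> int)
  (V : finType) (e : rel V) (s : {set V} -> bool) :
  (1 <= n)%N ->
  injective x ->
  (forall i, (1 < x i)%R) ->
  optimal_realization e s
    (fun d : int => d = 1%R \/ d = 0%R \/ exists i : 'I_n, d = x i) ->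
  #|neg_edges e s| = 1%N.
Proof.
(* The argument does not use [1 <= n]. *)
move=> _ x_inj x_gt1 [e_tree e_realizes e_optimal].
have sdeg_ge0 v : (0 <= sdeg e s v)%R.
  have /e_realizes[->|[->|[k ->]]] // : exists u, sdeg e s u = sdeg e s v by exists v.
  by have := x_gt1 k; lia.
have [z z0] : exists z, sdeg e s z = 0%R by apply/e_realizes; right; left.
have [o o1] : exists o, sdeg e s o = 1%R by apply/e_realizes; left.
have V_gt1 : (1 < #|V|)%N.
  by apply/card_gt1P; exists z, o; split=> //; apply/eqP => zo; move: z0; rewrite zo o1.
have attained k : exists v, sdeg e s v = x k by apply/e_realizes; right; right; exists k.
have := leq_sum_attained (fun d : int => `|d|%N - 1)%N x_inj attained.
have := e_optimal _ _ _ (caterpillar_tree x) (caterpillar_realizes x_gt1).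
rewrite (card_caterpillar x_gt1).
have := signed_tree_bound e_tree V_gt1 sdeg_ge0.
have := neg_edges_gt0 e_tree V_gt1 z0.
move: #|neg_edges e s| (\sum_v (`|sdeg e s v|%N - 1))%N (\sum_k (`|x k|%N - 1))%N #|V|.
lia.
Qed.
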